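(* Let $n\le s$ be positive integers and let $\mathbb{F}$ be a field with $|\mathbb{F}|\ge s'$, where $s'$ is the number of edges of the graph $G$ described in the context. Then the polynomial map $U(\mathbf{x},\mathbf{y}) : \mathbb{F}^{2s}\to\mathbb{F}^{n\times n}$ described in the context contains in its image every matrix $A\in\mathbb{F}^{n\times n}$ which is computed by a linear circuit of size at most $s$, and every coordinate of $U$ is a polynomial of degree at most $s'(s+1)$.
   Context: Linear circuits: a directed acyclic graph with $n$ input nodes labeled $X_1,\dots,X_n$ and $n$ output nodes, edges labeled by scalars of $\mathbb{F}$; each node computes the linear combination, with the edge labels as coefficients, of the linear forms computed by its children; size = number of edges; the circuit computes the matrix $A$ whose $(i,j)$ entry is the coefficient of $X_i$ in the form at the $j$-th output. The graph $G$: vertex set is a disjoint union $V_0\cup V_1\cup\dots\cup V_s\cup V_{s+1}$, where $V_0$ consists of $n$ input nodes labeled $X_1,\dots,X_n$, $V_{s+1}$ consists of $n$ output nodes, and each of $V_1,\dots,V_s$ has $s$ vertices; every vertex in $V_i$ has as children all vertices in $V_j$ for all $0\le j<i$ (for $0\le i\le s+1$). Let $s'$ be the number of edges of $G$ and enumerate them $e_1,\dots,e_{s'}$. The map $\mathrm{SV}_{s',s}(\mathbf{x},\mathbf{y}):\mathbb{F}^{2s}\to\mathbb{F}^{s'}$, with $\mathbf{x}=(x_1,\dots,x_s)$, $\mathbf{y}=(y_1,\dots,y_s)$: fix distinct $\alpha_1,\dots,\alpha_{s'}\in\mathbb{F}$, let $u_i(z)=\prod_{j\ne i}(z-\alpha_j)/\prod_{j\neq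 i}(\alpha_i-\alpha_j)$ be the Lagrange interpolation polynomials, and let the $i$-th coordinate be $P_i(\mathbf{x},\mathbf{y})=\sum_{j=1}^s u_i(y_j)x_j$. Label edge $e_i$ by $P_i(\mathbf{x},\mathbf{y})$. Then $U(\mathbf{x},\mathbf{y})$ is the $n\times n$ matrix whose $(i,j)$ entry is the sum, over all directed paths in $G$ from input $X_i$ to the $j$-th output node, of the product of the edge labels along the path. *)

From HB Require Import structures.
From mathcomp Require Import all_boot all_order all_algebra.
From mathcomp Require Import mpoly.
Set Implicit Arguments. Unset Strict Implicit. Unset Printing Implicit Defensive.
Import Order.TTheory GRing.Theory Num.Theory.
Local Open Scope ring_scope.

(* A circuit has nodes 'I_N.  An edge (u, v) \in E means that u is a    *)
(* child of v (the edge is directed from u to v) and carries the label  *)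
(* lab u v.  Acyclicity is encoded by a topological numbering: every    *)
(* edge (u, v) satisfies u < v (every finite DAG admits one).           *)
Record lcircuit (F : Type) (n : nat) := LCircuit {
  cN : nat;
  cE : {set 'I_cN * 'I_cN};
  clab : 'I_cN -> 'I_cN -> F;
  cin : 'I_n -> 'I_cN;
  cout : 'I_n -> 'I_cN
}.

Definition lcircuit_wf (F : Type) (n : nat) (C : lcircuit F n) : Prop :=
  (forall e, e \in cE C -> (e.1 < e.2)%N) /\
  [/\ injective (cin C), injective (cout C),
      (forall i j, cin C i != cout C j),
      (forall u i, (u, cin C i) \notin cE C) &
      (forall j v, (cout C j, v) \notin cE C)].

Definition lcircuit_size (F : Type) (n : nat) (C : lcircuit F n) : nat :=
  #|cE C|.

(* C computes A: the linear forms (coefficient row vectors) computed at *)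
(* the nodes satisfy the defining equations (they are uniquely          *)
(* determined, by acyclicity), and A i j is the coefficient of X_i in   *)
(* the form computed at the j-th output.                                *)
Definition lcircuit_computes (F : fieldType) (n : nat) (C : lcircuit F n)
    (A : 'M[F]_n) : Prop :=
  exists f : 'I_(cN C) -> 'rV[F]_n,
    [/\ forall i, f (cin C i) = delta_mx 0 i,
        forall v, (forall i, v != cin C i) ->
          f v = \sum_(u | (u, v) \in cE C) @clab F n C u v *: f u &
        forall i j, A i j = f (cout C j) 0 i].

(* The graph G: layers V_0 (n inputs), V_1..V_s (s vertices each),      *)
(* V_{s+1} (n outputs).                                                  *)
Definition layer_size (n s : nat) (l : 'I_s.+2) : nat :=
  if (val l == 0%N) || (val l == s.+1) then n else s.
Arguments layer_size : clear implicits.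

Definition Gvert (n s : nat) := {l : 'I_s.+2 & 'I_(layer_size n s l)}.

Definition Glayer (n s : nat) (v : Gvert n s) : nat := val (tag v).

Definition Gedge_rel (n s : nat) : rel (Gvert n s) :=
  fun u v => (Glayer u < Glayer v)%N.

(* edges of G (as pairs (child, parent)) *)
Definition Gedge (n s : nat) := {e : Gvert n s * Gvert n s | Gedge_rel e.1 e.2}.

Definition sprime (n s : nat) : nat := #|{: Gedge n s}|.

Lemma lt0_s2 (s : nat) : (0 < s.+2)%N. Proof. by []. Qed.
Lemma ltSs_s2 (s : nat) : (s.+1 < s.+2)%N. Proof. by []. Qed.

Definition layer0 (s : nat) : 'I_s.+2 := Ordinal (lt0_s2 s).
Definition layerlast (s : nat) : 'I_s.+2 := Ordinal (ltSs_s2 s).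

Lemma layer_size0 (n s : nat) : layer_size n s (layer0 s) = n.
Proof. by []. Qed.
Lemma layer_sizelast (n s : nat) : layer_size n s (layerlast s) = n.
Proof. by rewrite /layer_size /= eqxx. Qed.

Definition Ginput (n s : nat) (i : 'I_n) : Gvert n s :=
  Tagged (fun l => 'I_(layer_size n s l)) (cast_ord (esym (layer_size0 n s)) i).
Definition Goutput (n s : nat) (j : 'I_n) : Gvert n s :=
  Tagged (fun l => 'I_(layer_size n s l)) (cast_ord (esym (layer_sizelast n s)) j).

Definition xvar (F : fieldType) (s : nat) (j : 'I_s) : {mpoly F[s + s]} :=
  'X_(lshift s j).
Definition yvar (F : fieldType) (s : nat) (j : 'I_s) : {mpoly F[s + s]} :=
  'X_(rshift s j).

Definition lagrange_at (F : fieldType) (E : finType) (alpha : E -> F) (e : E)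
    (k : nat) (z : {mpoly F[k]}) : {mpoly F[k]} :=
  \prod_(e' | e' != e) ((z - (alpha e')%:MP) * ((alpha e - alpha e')^-1)%:MP).

Definition SVcoord (F : fieldType) (n s : nat) (alpha : Gedge n s -> F)
    (e : Gedge n s) : {mpoly F[s + s]} :=
  \sum_(j < s) lagrange_at alpha e (yvar F j) * xvar F j.

Definition Glabel (F : fieldType) (n s : nat) (alpha : Gedge n s -> F)
    (u v : Gvert n s) : {mpoly F[s + s]} :=
  match insub (u, v) with
  | Some e => SVcoord alpha e
  | None => 0
  end.

Fixpoint path_weight (V : Type) (R : pzRingType) (lbl : V -> V -> R)
    (x : V) (p : seq V) : R :=
  if p is y :: p' then lbl x y * path_weight lbl y p' else 1.

Definition is_Gpath (n s : nat) (i j : 'I_n) (p : seq (Gvert n s)) : bool :=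
  if p is x :: p' then
    [&& x == Ginput s i, last x p' == Goutput s j & path (@Gedge_rel n s) x p']
  else false.

(* U(x, y)_(i,j): sum over all directed paths from X_i to output j of the *)
(* product of edge labels.  Every path of G has at most s + 2 vertices     *)
(* (layers strictly increase), so paths are enumerated as k-tuples,        *)
(* k < s + 3; each path is counted exactly once.                           *)
Definition Umat (F : fieldType) (n s : nat) (alpha : Gedge n s -> F)
    : 'M[{mpoly F[s + s]}]_n :=
  \matrix_(i < n, j < n)
    \sum_(k < s.+3) \sum_(p : k.-tuple (Gvert n s) | is_Gpath i j p)
       path_weight (Glabel alpha) (head (Ginput s i) p) (behead p).

From HB Require Import structures.
From mathcomp Require Import all_boot all_order all_algebra.
From mathcomp Require Import mpoly.
From mathcomp Require Import zify.
Import GRing.Theory.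
Set Implicit Arguments. Unset Strict Implicit. Unset Printing Implicit Defensive.
Local Open Scope ring_scope.

(* Degree: an edge label P_e is a sum of Lagrange polynomials of degree s' - 1
   in some y_j times x_j, and a path of G has at most s + 1 edges.
   Image: number the non-input gates that feed another gate in topological
   order and put the k-th one in the k-th middle layer of G (there are at most
   s of them, one per edge), and the inputs and outputs in V_0 and V_(s+1).
   Pulling the circuit labels back along this embedding labels at most s edges
   of G, and SV reaches every vector with at most s nonzero coordinates: give
   the j-th such edge e the point y_j = alpha_e and the weight x_j = label of e,
   so that u_e(y_j) selects e alone.  The path sums from an input of G then
   satisfy the same recursion as the linear forms computed by the circuit. *)

Section MsizeBounds.
Variables (F : fieldType) (k : nat).
Implicit Types p q z : {mpoly F[k]}.

Lemma msizeM_le_pred p q : (msize (p * q) <= (msize p + msize q).-1)%N.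
Proof.
have [->|p0] := eqVneq p 0; first by rewrite mul0r msize0.
have [->|q0] := eqVneq q 0; first by rewrite mulr0 msize0.
by rewrite msizeM.
Qed.

Lemma msize_sum_le (I : Type) (r : seq I) (P : pred I) (G : I -> {mpoly F[k]}) m :
  (forall i, P i -> msize (G i) <= m)%N -> (msize (\sum_(i <- r | P i) G i) <= m)%N.
Proof.
move=> h; elim/big_ind: _ => //; first by rewrite msize0.
by move=> p q hp hq; apply: leq_trans (msizeD_le _ _) _; rewrite geq_max hp hq.
Qed.

Lemma msize_prod_le (I : Type) (r : seq I) (P : pred I) (G : I -> {mpoly F[k]}) :
  (msize (\prod_(i <- r | P i) G i) <= (\sum_(i <- r | P i) (msize (G i)).-1).+1)%N.
Proof.
elim/big_rec2: _ => [|i d p _ hp]; first by rewrite msize1.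
by apply: leq_trans (msizeM_le_pred _ _) _; lia.
Qed.

Lemma msize_path_weight (V : Type) (lbl : V -> V -> {mpoly F[k]}) d x t :
  (forall u v, msize (lbl u v) <= d.+1)%N ->
  (msize (path_weight lbl x t) <= (size t * d).+1)%N.
Proof.
move=> hlbl; elim: t x => [|y t IH] x /=; first by rewrite msize1.
apply: leq_trans (msizeM_le_pred _ _) _.
by have := hlbl x y; have := IH y; rewrite mulSn; lia.
Qed.

Lemma msize_lagrange_at (E : finType) (alpha : E -> F) e z :
  (msize z <= 2)%N -> (msize (lagrange_at alpha e z) <= #|E|)%N.
Proof.
move=> hz; rewrite /lagrange_at.
apply: leq_trans (msize_prod_le _ _ _) _.
have factor_le1 e' :
    ((msize ((z - (alpha e')%:MP) * ((alpha e - alpha e')^-1)%:MP)).-1 <= 1)%N.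
  have := msizeM_le_pred (z - (alpha e')%:MP) ((alpha e - alpha e')^-1)%:MP.
  have := msizeD_le z (- (alpha e')%:MP); rewrite msizeN !msizeC.
  by case: (_ != 0); case: (_ != 0) => /=; lia.
rewrite (cardD1 e) inE add1n ltnS.
apply: (@leq_trans (\sum_(e' | e' != e) 1)%N); first exact: leq_sum.
by rewrite sum1_card; apply: eq_leq; apply: eq_card => e'; rewrite !inE andbT.
Qed.

End MsizeBounds.

Section UmatDegree.
Variables (F : fieldType) (n s : nat) (alpha : Gedge n s -> F).

Lemma msize_SVcoord e : (msize (SVcoord alpha e) <= (sprime n s).+1)%N.
Proof.
apply: msize_sum_le => j _; apply: leq_trans (msizeM_le_pred _ _) _.
have msize_var i : msize ('X_i : {mpoly F[s + s]}) = 2%N by rewrite msizeX mdeg1.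
have := msize_lagrange_at alpha e (eq_leq (msize_var (rshift s j))).
by rewrite /xvar /yvar msize_var addn2 /= => /leq_trans; apply.
Qed.

Lemma msize_Glabel u v : (msize (Glabel alpha u v) <= (sprime n s).+1)%N.
Proof.
rewrite /Glabel; case: insubP => [e _ _|_]; first exact: msize_SVcoord.
by rewrite msize0.
Qed.

Lemma msize_Umat i j : (msize (Umat alpha i j) <= (sprime n s * s.+1).+1)%N.
Proof.
rewrite mxE; apply: msize_sum_le => k _; apply: msize_sum_le => p _.
apply: leq_trans (msize_path_weight _ _ msize_Glabel) _.
rewrite ltnS mulnC leq_mul2l size_behead size_tuple.
by apply/orP; right; have := ltn_ord k; lia.
Qed.

End UmatDegree.

Lemma path_weight_eq0 (V : Type) (R : pzRingType) (lbl : V -> V -> R) (r : rel V) x t :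
  (forall u v, ~~ r u v -> lbl u v = 0) -> ~~ path r x t -> path_weight lbl x t = 0.
Proof.
move=> lbl0; elim: t x => [|y t IH] x //=.
by rewrite negb_and => /orP [/lbl0 ->|/IH ->]; rewrite ?mul0r ?mulr0.
Qed.

Lemma big_tupleS (T : finType) (R : nmodType) k (G : k.+1.-tuple T -> R) :
  \sum_(t : k.+1.-tuple T) G t = \sum_(x : T) \sum_(t : k.-tuple T) G [tuple of x :: t].
Proof.
rewrite pair_bigA (reindex (fun p : T * k.-tuple T => [tuple of p.1 :: p.2])) //=.
exists (fun t : k.+1.-tuple T => (thead t, [tuple of behead t])).
  by case=> x t _ /=; rewrite theadE; congr pair; apply: val_inj.
by move=> t _; rewrite /= -tuple_eta.
Qed.

Section WalkSums.
Variables (V : finType) (R : comPzRingType).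
Implicit Types (lbl : V -> V -> R) (a b : V).

Definition walk_sum lbl k a b : R :=
  \sum_(t : k.-tuple V) (last a t == b)%:R * path_weight lbl a t.

Definition walk_sum_le lbl m a b : R := \sum_(k < m.+1) walk_sum lbl k a b.

Lemma walk_sum0 lbl a b : walk_sum lbl 0 a b = (a == b)%:R.
Proof.
by rewrite /walk_sum (big_pred1 [tuple]) /= ?mulr1 // => t; apply/esym/eqP/tuple0.
Qed.

Lemma sum_delta_l (G : V -> R) a : \sum_y (a == y)%:R * G y = G a.
Proof.
rewrite (bigD1 a) //= eqxx mul1r big1 ?addr0 // => y.
by rewrite eq_sym => /negPf ->; rewrite mul0r.
Qed.

Lemma sum_delta_r (G : V -> R) b : \sum_y G y * (y == b)%:R = G b.
Proof.
rewrite (bigD1 b) //= eqxx mulr1 big1 ?addr0 // => y /negPf ->.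
by rewrite mulr0.
Qed.

Lemma walk_sumS lbl k a b : walk_sum lbl k.+1 a b = \sum_y lbl a y * walk_sum lbl k y b.
Proof.
rewrite /walk_sum big_tupleS; apply: eq_bigr => y _.
by rewrite mulr_sumr; apply: eq_bigr => t _; rewrite mulrCA.
Qed.

Lemma walk_sumSr lbl k a b : walk_sum lbl k.+1 a b = \sum_y walk_sum lbl k a y * lbl y b.
Proof.
elim: k a b => [|k IH] a b.
  rewrite walk_sumS.
  under eq_bigr do rewrite walk_sum0.
  under [RHS]eq_bigr do rewrite walk_sum0.
  by rewrite sum_delta_l sum_delta_r.
rewrite walk_sumS; under eq_bigr do rewrite IH mulr_sumr.
rewrite exchange_big /=; apply: eq_bigr => z _.
by rewrite walk_sumS mulr_suml; apply: eq_bigr => y _; rewrite mulrA.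
Qed.

Section Layered.
Variables (lbl : V -> V -> R) (L : V -> nat).
Hypothesis lbl_layer : forall y b, lbl y b != 0 -> (L y < L b)%N.

Lemma walk_sum_layer k a b : walk_sum lbl k a b != 0 -> (L a + k <= L b)%N.
Proof.
elim: k a b => [|k IH] a b.
  by rewrite walk_sum0 addn0; case: (a =P b) => [->|]; rewrite ?eqxx.
rewrite walk_sumS; apply: contraNT; rewrite -ltnNge => ltk.
apply/eqP/big1 => y _.
have [->|/lbl_layer] := eqVneq (lbl a y) 0; first by rewrite mul0r.
have [->|/IH] := eqVneq (walk_sum lbl k y b) 0; first by rewrite mulr0.
by lia.
Qed.

Lemma walk_sum_le_rec m : (forall y, L y <= m)%N -> forall a b,
  walk_sum_le lbl m a b = (a == b)%:R + \sum_y walk_sum_le lbl m a y * lbl y b.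
Proof.
move=> Lm a b; rewrite /walk_sum_le big_ord_recl walk_sum0; congr (_ + _).
under eq_bigr do rewrite walk_sumSr.
rewrite exchange_big /=; apply: eq_bigr => y _.
rewrite [in RHS]big_ord_recr /= mulrDl mulr_suml -[LHS]addr0; congr (_ + _).
(* Every step raises L, so no walk has more than m steps. *)
have [->|/walk_sum_layer] := eqVneq (walk_sum lbl m a y) 0; first by rewrite mul0r.
have [->|/lbl_layer] := eqVneq (lbl y b) 0; first by rewrite mulr0.
by have := Lm b; lia.
Qed.

End Layered.
End WalkSums.

Lemma walk_sum_rmorph (V : finType) (R S : comPzRingType) (f : {rmorphism R -> S})
    (lbl : V -> V -> R) (lbl' : V -> V -> S) k a b :
  (forall x y, f (lbl x y) = lbl' x y) -> f (walk_sum lbl k a b) = walk_sum lbl' k a b.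
Proof.
move=> flbl; elim: k a b => [|k IH] a b; first by rewrite !walk_sum0 rmorph_nat.
by rewrite !walk_sumS rmorph_sum; apply: eq_bigr => y _; rewrite rmorphM IH flbl.
Qed.

Lemma Umat_walk_sum_le (F : fieldType) n s (alpha : Gedge n s -> F) i j :
  Umat alpha i j = walk_sum_le (Glabel alpha) s.+1 (Ginput s i) (Goutput s j).
Proof.
rewrite mxE big_ord_recl big_pred0 ?add0r => [|p]; last by rewrite tuple0.
apply: eq_bigr => k _; rewrite big_mkcond big_tupleS /= (bigD1 (Ginput s i)) //=.
rewrite [X in _ + X]big1 ?addr0 => [|x /negPf xi]; last by apply: big1 => t _; rewrite xi.
apply: eq_bigr => t _; rewrite eqxx /=.
case: (last _ _ == _); rewrite ?mul0r ?mul1r //.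
case: (boolP (path _ _ _)) => // npath.
apply/esym/(path_weight_eq0 _ npath) => u v /negPf uv.
by rewrite /Glabel insubF.
Qed.

Lemma meval_lagrange_at (F : fieldType) (E : finType) (alpha : E -> F) k
    (v : 'I_k -> F) e e' (z : {mpoly F[k]}) :
  injective alpha -> z.@[v] = alpha e' -> (lagrange_at alpha e z).@[v] = (e' == e)%:R.
Proof.
move=> alpha_inj zv; rewrite /lagrange_at rmorph_prod /=.
under eq_bigr do rewrite mevalM mevalB !mevalC zv.
have [->|ne] := eqVneq e' e; last by rewrite (bigD1 e') //= subrr !mul0r.
apply: big1 => e'' ne''; rewrite divff // subr_eq0.
by apply: contra ne'' => /eqP /alpha_inj ->.
Qed.

Lemma sum_nth_map (T : Type) (R : nmodType) (G : T -> R) (r : seq T) m :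
  (size r <= m)%N -> \sum_(j < m) nth 0 (map G r) j = \sum_(x <- r) G x.
Proof.
move=> rm; rewrite -(big_mkord xpredT (fun j => nth 0 (map G r) j)).
rewrite (big_cat_nat (n := size r)) //= [X in _ + X]big1_seq ?addr0 => [|j /andP [_]].
  by rewrite -(size_map G) -(big_nth 0 xpredT id) big_map.
by rewrite mem_index_iota => /andP [jge _]; rewrite nth_default ?size_map.
Qed.

Lemma SVcoord_onto_sparse (F : fieldType) n s (alpha h : Gedge n s -> F) :
  injective alpha -> (#|[set e | h e != 0%R]| <= s)%N ->
  exists v : 'I_(s + s) -> F, forall e, (SVcoord alpha e).@[v] = h e.
Proof.
move=> alpha_inj supp_le.
pose ed := enum [set e | h e != 0].
pose v (k : 'I_(s + s)) :=
  match split k with inl j => nth 0 (map h ed) j | inr j => nth 0 (map alpha ed) j end.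
exists v => e.
have vl j : v (lshift s j) = nth 0 (map h ed) j by rewrite /v (unsplitK (inl _ j)).
have vr j : v (rshift s j) = nth 0 (map alpha ed) j by rewrite /v (unsplitK (inr _ j)).
have term (j : 'I_s) : (lagrange_at alpha e (yvar F j) * xvar F j).@[v] =
    nth 0 (map (fun x => (x == e)%:R * h x) ed) j.
  rewrite mevalM /xvar mevalXU vl.
  have [jlt|jge] := ltnP j (size ed); last by rewrite !nth_default ?size_map // mulr0.
  rewrite !(nth_map e) // (meval_lagrange_at e (e' := nth e ed j)) //.
  by rewrite /yvar mevalXU vr (nth_map e).
rewrite /SVcoord rmorph_sum /=; under eq_bigr do rewrite term.
rewrite sum_nth_map -?cardE // big_enum /= big_mkcond /= -[RHS]sum_delta_l.
apply: eq_bigr => x _; rewrite inE eq_sym.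
case: (eqVneq e x) => [<-|_]; last by rewrite mul0r if_same.
by rewrite mul1r; case: ifPn => // /negPn/eqP ->.
Qed.

Definition rank N (S : {set 'I_N}) (u : 'I_N) : nat := #|[set w in S | (w < u)%N]|.

Lemma rank_lt_card N (S : {set 'I_N}) u : u \in S -> (rank S u < #|S|)%N.
Proof.
move=> uS; apply: proper_card; apply/properP; split.
  by apply/subsetP => w; rewrite inE => /andP [].
by exists u => //; rewrite inE ltnn andbF.
Qed.

Lemma rank_mono N (S : {set 'I_N}) (u w : 'I_N) :
  u \in S -> (u < w)%N -> (rank S u < rank S w)%N.
Proof.
move=> uS uw; apply: proper_card; apply/properP; split.
  by apply/subsetP => x; rewrite !inE => /andP [-> /ltn_trans ->].
by exists u; rewrite !inE ?uS ?uw // ltnn andbF.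
Qed.

Lemma rank_inj N (S : {set 'I_N}) : {in S &, injective (rank S)}.
Proof.
move=> u w uS wS ruw; case: (ltngtP u w) => [uw|wu|/val_inj //].
  by have := rank_mono uS uw; rewrite ruw ltnn.
by have := rank_mono wS wu; rewrite ruw ltnn.
Qed.

Lemma Ginput_inj n s : injective (@Ginput n s).
Proof. by move=> i i' /(congr1 (fun v : Gvert n s => val (tagged v))) ?; apply: val_inj. Qed.

Lemma Goutput_inj n s : injective (@Goutput n s).
Proof. by move=> j j' /(congr1 (fun v : Gvert n s => val (tagged v))) ?; apply: val_inj. Qed.

Lemma Glayer_le n s (y : Gvert n s) : (Glayer y <= s.+1)%N.
Proof. by rewrite -ltnS; apply: ltn_ord. Qed.

Section CircuitEmbedding.
Variables (F : fieldType) (n s : nat) (C : lcircuit F n).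
Hypotheses (C_wf : lcircuit_wf C) (C_size : (lcircuit_size C <= s)%N).
Hypotheses (n_gt0 : (0 < n)%N) (n_le_s : (n <= s)%N).

Local Notation node := 'I_(cN C).

Let edge_lt e : e \in cE C -> (e.1 < e.2)%N. Proof. by case: C_wf => + _; apply. Qed.
Let cin_inj : injective (cin C). Proof. by case: C_wf => _ []. Qed.
Let cout_inj : injective (cout C). Proof. by case: C_wf => _ []. Qed.
Let cin_neq_cout i j : cin C i != cout C j. Proof. by case: C_wf => _ []. Qed.
Let cout_no_parent j v : (cout C j, v) \notin cE C. Proof. by case: C_wf => _ []. Qed.

Definition is_input (u : node) := [exists i, cin C i == u].
Definition is_output (u : node) := [exists j, cout C j == u].

Definition inner : {set node} := [set u | ~~ is_input u & [exists w, (u, w) \in cE C]].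
Definition relevant u := (u \in inner) || is_output u.

Lemma card_inner : (#|inner| <= s)%N.
Proof.
apply: leq_trans C_size; apply: leq_trans (leq_imset_card (fun e : node * node => e.1) _).
apply/subset_leq_card/subsetP => u; rewrite inE => /andP [_ /existsP [w uw]].
by apply/imsetP; exists (u, w).
Qed.

Lemma rank_inner_lt u : u \in inner -> (rank inner u < s)%N.
Proof. by move/rank_lt_card/leq_trans; apply; apply: card_inner. Qed.

Lemma child_input_or_inner e : e \in cE C -> is_input e.1 || (e.1 \in inner).
Proof.
case: e => u w uw /=; case: (boolP (is_input u)) => //= u_ninput.
by rewrite inE u_ninput; apply/existsP; exists w.
Qed.

Let layer_size_gt0 l : (0 < layer_size n s l)%N.
Proof. by rewrite /layer_size; case: ifP => _; last apply: leq_trans n_le_s. Qed.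

Definition embed_vertex (u : node) : Gvert n s :=
  if [pick i | cin C i == u] is Some i then Ginput s i
  else if [pick j | cout C j == u] is Some j then Goutput s j
  else Tagged (fun l => 'I_(layer_size n s l))
         (Ordinal (layer_size_gt0 (inord (rank inner u).+1))).

Lemma embed_input i : embed_vertex (cin C i) = Ginput s i.
Proof.
by rewrite /embed_vertex; case: pickP => [i' /eqP /cin_inj -> //|/(_ i)]; rewrite eqxx.
Qed.

Lemma embed_output j : embed_vertex (cout C j) = Goutput s j.
Proof.
rewrite /embed_vertex; case: pickP => [i /eqP ij|_].
  by have := cin_neq_cout i j; rewrite ij eqxx.
by case: pickP => [j' /eqP /cout_inj -> //|/(_ j)]; rewrite eqxx.
Qed.

Lemma Glayer_embed_inner u : u \in inner -> Glayer (embed_vertex u) = (rank inner u).+1.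
Proof.
move=> u_inner; have := u_inner; rewrite inE => /andP [u_ninput /existsP [w uw]].
rewrite /embed_vertex.
case: pickP => [i /eqP ui|_]; first by case/existsP: u_ninput; exists i; rewrite ui.
case: pickP => [j /eqP uj|_]; first by move: uw; rewrite -uj (negPf (cout_no_parent _ _)).
by rewrite /Glayer /= inordK // !ltnS ltnW ?rank_inner_lt.
Qed.

Lemma Glayer_embed_gt0 u : relevant u -> (0 < Glayer (embed_vertex u))%N.
Proof.
by case/orP => [/Glayer_embed_inner -> // | /existsP [j /eqP <-]]; rewrite embed_output.
Qed.

Lemma embed_vertex_inj : {in relevant &, injective embed_vertex}.
Proof.
move=> u w /orP [u_inner|/existsP [j /eqP <-]] /orP [w_inner|/existsP [j' /eqP <-]].
- move/(congr1 (@Glayer n s)); rewrite !Glayer_embed_inner // => -[].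
  exact: rank_inj.
- rewrite embed_output => /(congr1 (@Glayer n s)); rewrite Glayer_embed_inner // => -[] r.
  by have := rank_inner_lt u_inner; rewrite r ltnn.
- rewrite embed_output => /(congr1 (@Glayer n s)); rewrite Glayer_embed_inner // => -[] r.
  by have := rank_inner_lt w_inner; rewrite -r ltnn.
- by rewrite !embed_output => /Goutput_inj ->.
Qed.

Lemma embed_edge e : e \in cE C -> relevant e.2 ->
  Gedge_rel (embed_vertex e.1) (embed_vertex e.2).
Proof.
move=> eE e2_rel; rewrite /Gedge_rel.
case/orP: (child_input_or_inner eE) => [/existsP [i /eqP <-]|e1_inner].
  by rewrite embed_input Glayer_embed_gt0.
rewrite Glayer_embed_inner //; case/orP: e2_rel => [e2_inner|/existsP [j /eqP <-]].
  by rewrite Glayer_embed_inner // ltnS rank_mono // edge_lt.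
by rewrite embed_output ltnS rank_inner_lt.
Qed.

Definition embed_label (y b : Gvert n s) : F :=
  \sum_(u | relevant u) \sum_(w | (w, u) \in cE C)
     (embed_vertex w == y)%:R * (embed_vertex u == b)%:R * clab w u.

Lemma embed_label_nonedge y b : ~~ Gedge_rel y b -> embed_label y b = 0.
Proof.
move=> nyb; apply: big1 => u u_rel; apply: big1 => w wu.
case: (embed_vertex w =P y) => [wy|_]; last by rewrite !mul0r.
case: (embed_vertex u =P b) => [ub|_]; last by rewrite mulr0 mul0r.
by move: nyb; rewrite -wy -ub (embed_edge wu u_rel).
Qed.

Lemma embed_label_support :
  (#|[set e : Gedge n s | embed_label (val e).1 (val e).2 != 0%R]| <= s)%N.
Proof.
pose image := [set (embed_vertex e.1, embed_vertex e.2) | e in cE C].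
apply: leq_trans C_size; apply: (@leq_trans #|image|); last exact: leq_imset_card.
rewrite -(card_imset _ val_inj); apply/subset_leq_card/subsetP => _ /imsetP [e + ->].
rewrite inE => nz; apply: contraR nz => e_nimage; apply/eqP/big1 => u u_rel.
apply: big1 => w wu.
case: (embed_vertex w =P _) => [wy|_]; last by rewrite !mul0r.
case: (embed_vertex u =P _) => [ub|_]; last by rewrite mulr0 mul0r.
case/negP: e_nimage; apply/imsetP; exists (w, u) => //=.
by rewrite wy ub -surjective_pairing.
Qed.

Lemma embed_label_relevant u y : relevant u ->
  embed_label y (embed_vertex u) =
  \sum_(w | (w, u) \in cE C) (embed_vertex w == y)%:R * clab w u.
Proof.
move=> u_rel; rewrite /embed_label (bigD1 u) //= [X in _ + X]big1 ?addr0.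
  by apply: eq_bigr => w _; rewrite eqxx mulr1.
move=> u' /andP [u'_rel u'u]; apply: big1 => w _.
have /negPf -> : embed_vertex u' != embed_vertex u.
  by apply: contraNneq u'u => /embed_vertex_inj ->.
by rewrite mulr0 mul0r.
Qed.

Section NodeValues.
Variable f : node -> 'rV[F]_n.
Hypothesis f_input : forall i, f (cin C i) = delta_mx 0 i.
Hypothesis f_gate : forall v, (forall i, v != cin C i) ->
  f v = \sum_(u | (u, v) \in cE C) clab u v *: f u.

Lemma walk_sum_embed i u : is_input u || relevant u ->
  walk_sum_le embed_label s.+1 (Ginput s i) (embed_vertex u) = f u 0 i.
Proof.
have [k] := ubnP (val u); elim: k u => // k IH u /= ltuk u_rel.
have label_layer y b : embed_label y b != 0 -> (Glayer y < Glayer b)%N.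
  by apply: contraR => /embed_label_nonedge ->.
rewrite (walk_sum_le_rec label_layer (@Glayer_le n s)).
case: (boolP (is_input u)) => [/existsP [i' /eqP <-]|u_ninput].
  rewrite embed_input big1 ?addr0 => [|y _]; last by rewrite embed_label_nonedge ?mulr0.
  by rewrite f_input mxE (inj_eq (@Ginput_inj n s)).
rewrite (negPf u_ninput) /= in u_rel.
have -> : (Ginput s i == embed_vertex u) = false.
  by apply: contraTF (Glayer_embed_gt0 u_rel) => /eqP <-.
rewrite add0r f_gate => [|i']; last first.
  by apply: contra u_ninput => /eqP ->; apply/existsP; exists i'.
rewrite summxE; under eq_bigr do rewrite embed_label_relevant // mulr_sumr.
rewrite exchange_big /=; apply: eq_bigr => w wu.
under eq_bigr do rewrite mulrCA.
rewrite sum_delta_l mxE mulrC IH //; first by have := edge_lt wu; rewrite /=; lia.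
by have := child_input_or_inner wu; rewrite /relevant /=; case/orP => ->; rewrite ?orbT.
Qed.

End NodeValues.

Lemma lcircuit_in_Umat_image (alpha : Gedge n s -> F) (A : 'M[F]_n) :
  injective alpha -> lcircuit_computes C A ->
  exists v : 'I_(s + s) -> F, forall i j, (Umat alpha i j).@[v] = A i j.
Proof.
move=> alpha_inj [f [f_input f_gate fA]].
have [v SVv] := SVcoord_onto_sparse alpha_inj embed_label_support.
exists v => i j.
have Glabel_v y b : (Glabel alpha y b).@[v] = embed_label y b.
  rewrite /Glabel; case: insubP => [e _ ev|nyb]; first by rewrite SVv ev.
  by rewrite meval0 embed_label_nonedge.
have out_rel : relevant (cout C j) by apply/orP; right; apply/existsP; exists j.
rewrite Umat_walk_sum_le fA -(walk_sum_embed f_input f_gate) ?out_rel ?orbT //.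
rewrite embed_output rmorph_sum; apply: eq_bigr => k _.
exact: walk_sum_rmorph.
Qed.

End CircuitEmbedding.

Theorem lemma3p1 (F : fieldType) (n s : nat) (alpha : Gedge n s -> F) :
  (0 < n)%N -> (n <= s)%N ->
  injective alpha ->
  (forall (A : 'M[F]_n) (C : lcircuit F n),
      lcircuit_wf C -> (lcircuit_size C <= s)%N -> lcircuit_computes C A ->
      exists v : 'I_(s + s) -> F, forall i j, (Umat alpha i j).@[v] = A i j)
  /\ (forall i j, (msize (Umat alpha i j) <= (sprime n s * s.+1).+1)%N).
Proof.
move=> n_gt0 n_le_s alpha_inj; split; last exact: msize_Umat.
by move=> A C C_wf C_size; apply: lcircuit_in_Umat_image.
Qed.
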